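(* Let $n\ge2$. For every $X\in U_Q$ and every $s>0$ such that the horoballs $\mathcal H_s$ and $X\mathcal H_s$ of $\mathbb H^n_{\mathbb C}$ have disjoint interiors, we have $$d'_{\mathbb H^n_{\mathbb C}}(\mathcal H_s,X\mathcal H_s)=\log|c|+\log\frac s2,$$ where $c$ is the bottom-left entry of $X$ in the block decomposition $\mathbb C\times\mathbb C^{n-1}\times\mathbb C$.
   Context: $\mathbb H^n_{\mathbb C}=\{(w_0,w)\in\mathbb C\times\mathbb C^{n-1}:2\mathrm{Re}\,w_0-|w|^2>0\}$ is the Siegel domain with metric $ds^2=\frac{4}{(2\mathrm{Re}\,w_0-|w|^2)^2}\big((dw_0-dw^*w)(\overline{dw_0}-w^*dw)+(2\mathrm{Re}\,w_0-|w|^2)dw^*dw\big)$, $d_{\mathbb H^n_{\mathbb C}}$ its Riemannian distance and $d'_{\mathbb H^n_{\mathbb C}}=\frac12 d_{\mathbb H^n_{\mathbb C}}$; $\mathcal H_s=\{2\mathrm{Re}\,w_0-|w|^2\ge s\}$. Let $q(z_0,z,z_n)=-z_0\bar z_n-z_n\bar z_0+|z|^2$ on $\mathbb C\times\mathbb C^{n-1}\times\mathbb C$, with matrix $Q=\begin{pmatrix}0&0&-1\\0&I&0\\-1&0&0\end{pmatrix}$, and $U_Q$ the group of invertible complex matrices preserving $q$. Via the embedding $(w_0,w)\mapsto[w_0:w:1]$ of $\mathbb H^n_{\mathbb C}$ onto the negative cone of $q$ in $\mathbb P_n(\mathbb C)$, $U_Q$ acts isometrically on $\mathbb H^n_{\mathbb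 C}$ by projective transformations. The distance between two sets is the infimum of distances between their points. *)

From HB Require Import structures.
From mathcomp Require Import all_boot all_order all_algebra.
From mathcomp Require Import all_classical all_reals all_analysis.
From mathcomp Require Import complex.
Set Implicit Arguments. Unset Strict Implicit. Unset Printing Implicit Defensive.
Import Order.TTheory GRing.Theory Num.Theory.
Import numFieldNormedType.Exports.
Local Open Scope classical_set_scope.
Local Open Scope ring_scope.

Section ComplexHyperbolic.
Variable R : realType.
Local Notation C := (complex R).

Definition nsq (z : C) : R := complex.Re z ^+ 2 + complex.Im z ^+ 2.
Definition cabs (z : C) : R := Num.sqrt (nsq z).

(* A point (w0, w) of C x C^{n-1} is a function 'I_n -> C:
   index 0 is w0, indices 1..n-1 are the coordinates of w. *)
Variable n : nat.
Definition pt := 'I_n -> C.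

Definition is_w0 (i : 'I_n) : bool := (nat_of_ord i == 0)%N.

Definition height (p : pt) : R :=
  \sum_(i < n) (if is_w0 i then 2 * complex.Re (p i) else - nsq (p i)).

Definition Siegel : set pt := [set p | 0 < height p].

Definition horoball (s : R) : set pt := [set p | s <= height p].

(* the metric ds^2 at point p applied to the tangent vector v :
   4/h^2 ( |dw0 - dw^* w|^2 + h |dw|^2 ) *)
Definition metric (p v : pt) : R :=
  let h := height p in
  let a := \sum_(i < n) (if is_w0 i then v i else - (conjc (v i) * p i)) in
  let b := \sum_(i < n) (if is_w0 i then 0 else nsq (v i)) in
  4 / h ^+ 2 * (nsq a + h * b).

Definition C1curve (g : R -> pt) : Prop :=
  forall i : 'I_n,
    (forall t, derivable (fun u => complex.Re (g u i)) t 1) /\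
    continuous (fun u => derive1 (fun u => complex.Re (g u i)) u) /\
    (forall t, derivable (fun u => complex.Im (g u i)) t 1) /\
    continuous (fun u => derive1 (fun u => complex.Im (g u i)) u).

Definition velocity (g : R -> pt) (t : R) : pt :=
  fun i => Complex (derive1 (fun u => complex.Re (g u i)) t)
                   (derive1 (fun u => complex.Im (g u i)) t).

Definition curve_length (g : R -> pt) : R :=
  Rintegral lebesgue_measure `[0, 1]
    (fun t => Num.sqrt (metric (g t) (velocity g t))).

Definition admissible (p q : pt) (g : R -> pt) : Prop :=
  C1curve g /\ g 0 = p /\ g 1 = q /\
  (forall t, 0 <= t <= 1 -> Siegel (g t)).

Definition dist_CH (p q : pt) : R :=
  inf [set curve_length g | g in admissible p q].

Definition dist'_CH (p q : pt) : R := dist_CH p q / 2.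

Definition set_dist' (A B : set pt) : R :=
  inf [set dist'_CH p q | p in A & q in B].

Definition cinterior (A : set pt) : set pt :=
  [set p | exists2 e : R, 0 < e &
     forall q : pt, \sum_(i < n) nsq (q i - p i) < e -> A q].

(* The hermitian form q with matrix Q on C x C^{n-1} x C = C^{n+1};
   index 0 is z0, indices 1..n-1 are z, index n is zn. *)
Definition Qmx : 'M[C]_(n.+1) :=
  \matrix_(i, j)
    (if (nat_of_ord i == 0)%N && (nat_of_ord j == n) then -1
     else if (nat_of_ord i == n) && (nat_of_ord j == 0)%N then -1
     else if (i == j) && (0 < nat_of_ord i < n)%N then 1 else 0).

Definition in_UQ (X : 'M[C]_(n.+1)) : Prop :=
  X \in unitmx /\ (map_mx conjc X)^T *m Qmx *m X = Qmx.

Definition lift_pt (p : pt) : 'cV[C]_(n.+1) :=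
  \col_(i < n.+1) (if (i < n)%N =P true is ReflectT h then p (Ordinal h) else 1).

Definition act (X : 'M[C]_(n.+1)) (p : pt) : pt :=
  let z := X *m lift_pt p in
  fun i => z (widen_ord (leqnSn n) i) 0 / z ord_max 0.

Definition act_set (X : 'M[C]_(n.+1)) (A : set pt) : set pt := act X @` A.

Definition bottom_left (X : 'M[C]_(n.+1)) : C := X ord_max ord0.

End ComplexHyperbolic.

(** Lifting a point [p] of the Siegel domain to [z = (p, 1)], its height is
    [- Re q(z, z)], and [q] is [U_Q]-invariant.  The image [x = X e0] of the
    point at infinity is isotropic with [x_n = c] and [q(X z, x) = -1], so a
    Lagrange-type identity for [q] gives [|c|^2 h(p) h(X p) <= 4].  Along any
    curve [ds >= - d(ln h)], hence [d(p, q) >= ln h(p) - ln h(q)], and the two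
    facts bound [d'(H_s, X H_s)] below by [ln (|c| s / 2)].  The vertical
    geodesic above [X ∞] attains this bound: disjointness of the interiors
    forces [|c| s >= 2], which is exactly what makes its points at heights [s]
    and [4 / (|c|^2 s)] lie in [H_s] and [X H_s] in the right order. *)

From HB Require Import structures.
From mathcomp Require Import all_boot all_order all_algebra.
From mathcomp Require Import all_classical all_reals all_analysis.
From mathcomp Require Import complex.
From mathcomp Require Import ring lra.
Set Implicit Arguments. Unset Strict Implicit. Unset Printing Implicit Defensive.
Import Order.TTheory GRing.Theory Num.Theory.
Import numFieldNormedType.Exports.
Local Open Scope classical_set_scope.
Local Open Scope ring_scope.

Section RealInequalities.
Variable R : realFieldType.

Lemma weighted_amgm (a b l : R) : 0 < l -> 2 * a * b <= l * a ^+ 2 + b ^+ 2 / l.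
Proof.
move=> l0; rewrite -subr_ge0.
have -> : l * a ^+ 2 + b ^+ 2 / l - 2 * a * b = (l * a - b) ^+ 2 / l.
  by field; rewrite gt_eqF.
by rewrite divr_ge0 ?sqr_ge0 ?ltW.
Qed.

Lemma sqr_sum_le (k : nat) (a : 'I_k -> R) :
  (\sum_(i < k) a i) ^+ 2 <= k%:R * \sum_(i < k) a i ^+ 2.
Proof.
elim: k a => [|k IH] a; first by rewrite !big_ord0 expr0n /= mul0r.
rewrite !big_ord_recr /= -natr1.
have := IH (fun i => a (widen_ord (leqnSn k) i)).
set S := \sum_(i < k) _; set T := \sum_(i < k) _; set x := a ord_max => hST.
have T0 : 0 <= T by apply: sumr_ge0 => i _; apply: sqr_ge0.
have [k0|kpos] := eqVneq k 0%N.
  have S0 : S = 0.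
    by apply/eqP; rewrite -sqrf_eq0 eq_le sqr_ge0 andbT; move: hST; rewrite k0 mulr0n mul0r.
  rewrite S0 k0 mulr0n !add0r mul1r; lra.
have kgt0 : 0 < k%:R :> R by rewrite ltr0n lt0n.
have : 0 <= (S - k%:R * x) ^+ 2 by apply: sqr_ge0.
nra.
Qed.

End RealInequalities.

Section ComplexArithmetic.
Variable R : realType.
Local Notation C := (complex R).
Implicit Types (x y z : C).

Lemma ReD x y : complex.Re (x + y) = complex.Re x + complex.Re y.
Proof. by case: x => a b; case: y. Qed.
Lemma ImD x y : complex.Im (x + y) = complex.Im x + complex.Im y.
Proof. by case: x => a b; case: y. Qed.
Lemma ReN x : complex.Re (- x) = - complex.Re x.
Proof. by case: x. Qed.
Lemma ImN x : complex.Im (- x) = - complex.Im x.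
Proof. by case: x. Qed.
Lemma ReM x y :
  complex.Re (x * y) = complex.Re x * complex.Re y - complex.Im x * complex.Im y.
Proof. by case: x => a b; case: y. Qed.
Lemma ImM x y :
  complex.Im (x * y) = complex.Re x * complex.Im y + complex.Im x * complex.Re y.
Proof. by case: x => a b; case: y. Qed.
Lemma ReJ x : complex.Re (conjc x) = complex.Re x.
Proof. by case: x. Qed.
Lemma ImJ x : complex.Im (conjc x) = - complex.Im x.
Proof. by case: x. Qed.

Lemma Re_sum (I : Type) (r : seq I) (P : pred I) (F : I -> C) :
  complex.Re (\sum_(i <- r | P i) F i) = \sum_(i <- r | P i) complex.Re (F i).
Proof. exact: (big_morph _ ReD). Qed.
Lemma Im_sum (I : Type) (r : seq I) (P : pred I) (F : I -> C) :
  complex.Im (\sum_(i <- r | P i) F i) = \sum_(i <- r | P i) complex.Im (F i).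
Proof. exact: (big_morph _ ImD). Qed.

Local Ltac simp_ReIm := rewrite ?/nsq ?(ReM, ImM, ReD, ImD, ReN, ImN, ReJ, ImJ).

Lemma nsq_ge0 x : 0 <= nsq x.
Proof. by rewrite /nsq addr_ge0 ?sqr_ge0. Qed.

Lemma nsq_gt0 x : x != 0 -> 0 < nsq x.
Proof.
case: x => a b nz; rewrite lt_neqAle nsq_ge0 andbT eq_sym /nsq /=.
by apply: contra nz; rewrite paddr_eq0 ?sqr_ge0 // !sqrf_eq0 => /andP[/eqP-> /eqP->].
Qed.

Lemma nsqM x y : nsq (x * y) = nsq x * nsq y.
Proof. by simp_ReIm; ring. Qed.
Lemma nsqJ x : nsq (conjc x) = nsq x.
Proof. by simp_ReIm; ring. Qed.
Lemma nsqN x : nsq (- x) = nsq x.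
Proof. by simp_ReIm; ring. Qed.
Lemma nsq_real (t : R) : nsq (Complex t 0) = t ^+ 2.
Proof. by rewrite /nsq /= expr0n addr0. Qed.
Lemma nsq0 : nsq (0 : C) = 0.
Proof. by rewrite /nsq /= expr0n addr0. Qed.

Lemma nsqV x : nsq x^-1 = (nsq x)^-1.
Proof.
have [->|nz] := eqVneq x 0; first by rewrite invr0 nsq_real expr0n invr0.
have := nsq_gt0 nz; case: x nz => a b _; rewrite /nsq /= => h.
by field; rewrite gt_eqF.
Qed.

Lemma Re_sqr_le_nsq x : complex.Re x ^+ 2 <= nsq x.
Proof. by rewrite /nsq lerDl sqr_ge0. Qed.

Lemma Re_JM x z : complex.Re (conjc x * x * z) = nsq x * complex.Re z.
Proof. by simp_ReIm; ring. Qed.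

Lemma nsq_sum (k : nat) (F : 'I_k -> C) :
  nsq (\sum_(i < k) F i) <= k%:R * \sum_(i < k) nsq (F i).
Proof.
rewrite /nsq Re_sum Im_sum big_split /= mulrDr.
by apply: lerD; apply: sqr_sum_le.
Qed.

Lemma nsqD_le x y (l : R) : 0 < l ->
  nsq (x + y) <= (1 + l) * nsq x + (1 + l^-1) * nsq y.
Proof.
move=> l0; have := weighted_amgm (complex.Re x) (complex.Re y) l0.
have := weighted_amgm (complex.Im x) (complex.Im y) l0.
rewrite /nsq ReD ImD; set a := complex.Re x; set b := complex.Im x.
set c := complex.Re y; set d := complex.Im y.
have -> : (1 + l^-1) * (c ^+ 2 + d ^+ 2) = c ^+ 2 + d ^+ 2 + c ^+ 2 / l + d ^+ 2 / l.
  by rewrite mulrDl mul1r mulrDr addrA [l^-1 * _]mulrC [l^-1 * _]mulrC.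
nra.
Qed.

End ComplexArithmetic.

Lemma scalemxE (R : pzRingType) (k l : nat) (a : R) (A : 'M[R]_(k, l)) i j :
  (a *: A) i j = a * A i j.
Proof. by rewrite mxE. Qed.

Section HermitianForm.
Variable R : realType.
Local Notation C := (complex R).
Variable m : nat.
Local Notation n := m.+1.
Local Notation cv := 'cV[C]_(n.+1).
Local Notation widen := (widen_ord (leqnSn n)).
Implicit Types (u v x z : cv) (p q : pt R n).

Definition qform u v : C := ((map_mx conjc u)^T *m Qmx R n *m v) 0 0.

Definition qform_term u v (i : 'I_n) : C :=
  if is_w0 i then - (conjc (u (widen i) 0) * v ord_max 0 + conjc (u ord_max 0) * v (widen i) 0)
  else conjc (u (widen i) 0) * v (widen i) 0.

Lemma is_w0_ord0 : is_w0 (ord0 : 'I_n). Proof. by []. Qed.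
Lemma is_w0_lift (i : 'I_m) : is_w0 (lift ord0 i : 'I_n) = false. Proof. by []. Qed.

Lemma mulQmx_col v (j : 'I_n.+1) :
  (Qmx R n *m v) j 0 = if nat_of_ord j == 0%N then - v ord_max 0
                       else if nat_of_ord j == n then - v 0 0 else v j 0.
Proof.
rewrite mxE; have [j0|jn0] := eqVneq (nat_of_ord j) 0%N.
  rewrite (bigD1 ord_max) //= big1 ?addr0 => [|k kN]; rewrite !mxE j0 /=.
    by rewrite eqxx mulN1r.
  have /negbTE-> : nat_of_ord k != n by apply: contra kN => /eqP kn; apply/eqP/val_inj.
  by rewrite andbF mul0r.
have [jn|jnn] := eqVneq (nat_of_ord j) n.
  rewrite (bigD1 0) //= big1 ?addr0 => [|k k0]; rewrite !mxE jn /=.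
    by rewrite eqxx mulN1r.
  have /negbTE-> : nat_of_ord k != 0%N by apply: contra k0 => /eqP kn; apply/eqP/val_inj.
  by rewrite andbF ltnn andbF mul0r.
have jlt : (nat_of_ord j < n)%N by rewrite ltn_neqAle jnn -ltnS ltn_ord.
rewrite (bigD1 j) //= big1 ?addr0 => [|k kj]; rewrite !mxE (negbTE jn0) (negbTE jnn) /=.
  by rewrite eqxx lt0n jn0 jlt mul1r.
by rewrite eq_sym (negbTE kj) mul0r.
Qed.

Lemma qformE u v : qform u v = \sum_(i < n) qform_term u v i.
Proof.
rewrite /qform -mulmxA mxE big_ord_recr big_ord_recl [in RHS]big_ord_recl /=.
under eq_bigr do rewrite mulQmx_col !mxE.
rewrite !mulQmx_col !mxE /= /qform_term /= eqxx.
have -> : widen ord0 = 0 by apply/val_inj.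
under eq_bigr => i _ do rewrite /bump /= add1n eqSS ltn_eqF //.
by rewrite addrC addrA; congr (_ + _); ring.
Qed.

Lemma qformDl u v x : qform (u + v) x = qform u x + qform v x.
Proof.
rewrite !qformE -big_split /=; apply: eq_bigr => i _; rewrite /qform_term !mxE !rmorphD.
by case: ifP => _; ring.
Qed.

Lemma qformDr u v x : qform x (u + v) = qform x u + qform x v.
Proof.
rewrite !qformE -big_split /=; apply: eq_bigr => i _; rewrite /qform_term !mxE.
by case: ifP => _; ring.
Qed.

Lemma qformZl (a : C) u v : qform (a *: u) v = conjc a * qform u v.
Proof.
rewrite !qformE mulr_sumr; apply: eq_bigr => i _; rewrite /qform_term !mxE !rmorphM.
by case: ifP => _; ring.
Qed.

Lemma qformZr (a : C) u v : qform u (a *: v) = a * qform u v.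
Proof.
rewrite !qformE mulr_sumr; apply: eq_bigr => i _; rewrite /qform_term !mxE.
by case: ifP => _; ring.
Qed.

Lemma qform_UQ (X : 'M[C]_n.+1) u v : in_UQ X -> qform (X *m u) (X *m v) = qform u v.
Proof.
move=> [_ XQX]; rewrite /qform map_mxM trmx_mul -!mulmxA (mulmxA (map_mx _ X)^T).
by rewrite (mulmxA _ X) XQX.
Qed.

Definition e0 : cv := \col_(i < n.+1) (if nat_of_ord i == 0%N then 1 else 0).

Lemma e0_widen (i : 'I_n) : e0 (widen i) 0 = if is_w0 i then 1 else 0.
Proof. by rewrite mxE. Qed.
Lemma e0_last : e0 ord_max 0 = 0.
Proof. by rewrite mxE. Qed.

Lemma mulmx_e0 (X : 'M[C]_n.+1) (i : 'I_n.+1) : (X *m e0) i 0 = X i 0.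
Proof.
rewrite mxE (bigD1 0) //= big1 ?addr0 => [|k k0]; rewrite !mxE /=; first by rewrite mulr1.
have /negbTE-> : nat_of_ord k != 0%N by apply: contra k0 => /eqP h; apply/eqP/val_inj.
by rewrite mulr0.
Qed.

Lemma qform_e0l v : qform e0 v = - v ord_max 0.
Proof.
rewrite qformE big_ord_recl big1 ?addr0 => [|i _].
  by rewrite /qform_term !e0_widen e0_last is_w0_ord0 conjc1 conjc0; ring.
by rewrite /qform_term e0_widen is_w0_lift conjc0 mul0r.
Qed.

Lemma qform_e0r u : qform u e0 = - conjc (u ord_max 0).
Proof.
rewrite qformE big_ord_recl big1 ?addr0 => [|i _].
  by rewrite /qform_term !e0_widen e0_last is_w0_ord0; ring.
by rewrite /qform_term e0_widen is_w0_lift mulr0.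
Qed.

Lemma qform_e0e0 : qform e0 e0 = 0.
Proof. by rewrite qform_e0l e0_last oppr0. Qed.

Lemma qform_ge0_of_last0 u : u ord_max 0 = 0 -> 0 <= complex.Re (qform u u).
Proof.
move=> u0; rewrite qformE Re_sum; apply: sumr_ge0 => i _; rewrite /qform_term u0.
by case: ifP => _; rewrite ?(ReM, ReD, ReN, ReJ, ImJ) /=; nra.
Qed.

Lemma last_neq0_of_qform_lt0 u : complex.Re (qform u u) < 0 -> u ord_max 0 != 0.
Proof. by apply: contraTneq => /qform_ge0_of_last0; rewrite leNgt => /negbTE->. Qed.

Lemma qform_lagrange u v :
  2 * complex.Re (conjc (v ord_max 0) * u ord_max 0 * qform u v) =
  nsq (v ord_max 0) * complex.Re (qform u u) + nsq (u ord_max 0) * complex.Re (qform v v)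
  - \sum_(i < n) (if is_w0 i then 0
                  else nsq (v ord_max 0 * u (widen i) 0 - u ord_max 0 * v (widen i) 0)).
Proof.
rewrite !qformE !Re_sum mulr_sumr Re_sum !mulr_sumr -big_split -sumrB /=.
by apply: eq_bigr => i _; rewrite /qform_term; case: ifP => _;
  rewrite /nsq ?(ReM, ImM, ReD, ImD, ReN, ImN, ReJ, ImJ); ring.
Qed.

Lemma lift_pt_widen p (i : 'I_n) : lift_pt p (widen i) 0 = p i.
Proof.
rewrite mxE; case: eqP => [h|]; first by congr p; apply/val_inj.
by rewrite /= ltn_ord.
Qed.

Lemma lift_pt_last p : lift_pt p ord_max 0 = 1.
Proof. by rewrite mxE; case: eqP => // h; exfalso; move: h; rewrite /= ltnn. Qed.

Lemma qform_lift_e0 p : qform (lift_pt p) e0 = -1.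
Proof. by rewrite qform_e0r lift_pt_last conjc1. Qed.

Lemma Re_qform_lift p : complex.Re (qform (lift_pt p) (lift_pt p)) = - height p.
Proof.
rewrite qformE Re_sum /height -sumrN; apply: eq_bigr => i _.
rewrite /qform_term lift_pt_last !lift_pt_widen /nsq.
by case: ifP => _; rewrite ?(ReM, ReD, ReN, ReJ, ImJ) /=; ring.
Qed.

Definition dehomog z : pt R n := fun i => z (widen i) 0 / z ord_max 0.

Lemma eq_ord_max (i : 'I_n.+1) : (i < n)%N = false -> i = ord_max.
Proof. by move=> h; apply/val_inj/eqP; rewrite eqn_leq -ltnS ltn_ord /= leqNgt h. Qed.

Lemma lift_dehomog z : z ord_max 0 != 0 -> lift_pt (dehomog z) = (z ord_max 0)^-1 *: z.
Proof.
move=> nz; apply/matrixP => i j; rewrite (ord1 j) !mxE.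
case: eqP => [h|/negP/negbTE/eq_ord_max->]; last by rewrite mulVf.
by rewrite /dehomog mulrC; congr (_ * z _ 0); apply/val_inj.
Qed.

Lemma height_dehomog z : z ord_max 0 != 0 ->
  height (dehomog z) = - complex.Re (qform z z) / nsq (z ord_max 0).
Proof.
move=> nz; apply: oppr_inj; rewrite -Re_qform_lift lift_dehomog // qformZl qformZr mulrA.
by rewrite Re_JM nsqV mulNr opprK mulrC.
Qed.

End HermitianForm.

Section ProjectiveAction.
Variable R : realType.
Local Notation C := (complex R).
Variable m : nat.
Local Notation n := m.+1.
Variable X : 'M[C]_n.+1.
Hypothesis XUQ : in_UQ X.
Implicit Types (p q : pt R n).

Local Notation x := (X *m e0 R m).

Lemma bottom_leftE : bottom_left X = x ord_max 0.
Proof. by rewrite mulmx_e0. Qed.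

Lemma qform_image_e0 : qform x x = 0.
Proof. by rewrite qform_UQ // qform_e0e0. Qed.

Lemma act_last_neq0 p : 0 < height p -> (X *m lift_pt p) ord_max 0 != 0.
Proof. by move=> hp; apply: last_neq0_of_qform_lt0; rewrite qform_UQ // Re_qform_lift oppr_lt0. Qed.

Lemma height_act p : 0 < height p ->
  height (act X p) = height p / nsq ((X *m lift_pt p) ord_max 0).
Proof.
move=> hp; rewrite /act -/(dehomog _) height_dehomog ?act_last_neq0 //.
by rewrite qform_UQ // Re_qform_lift opprK.
Qed.

Lemma nsq_bottom_left_mul_height_le p : 0 < height p ->
  nsq (bottom_left X) * height p
    <= 2 * complex.Re (conjc (x ord_max 0) * (X *m lift_pt p) ord_max 0).
Proof.
move=> hp; have := qform_lagrange (X *m lift_pt p) x.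
rewrite !qform_UQ // qform_lift_e0 qform_e0e0 Re_qform_lift mulrN1 ReN mulr0 addr0.
rewrite bottom_leftE; set S := \sum_(i < n) _.
have : 0 <= S by apply: sumr_ge0 => i _; case: ifP => _ //; apply: nsq_ge0.
lra.
Qed.

(** Combined with [Re (conj c z_n) <= |c| |z_n|], the previous estimate gives
    [|c|^2 h(p)^2 <= 4 |z_n|^2], and [h(X p) = h(p) / |z_n|^2]. *)
Lemma height_act_bound p : 0 < height p ->
  nsq (bottom_left X) * height p * height (act X p) <= 4.
Proof.
move=> hp; rewrite height_act // mulrA ler_pdivrMr ?nsq_gt0 ?act_last_neq0 //.
have h2 := nsq_bottom_left_mul_height_le hp; rewrite bottom_leftE in h2 *.
have := Re_sqr_le_nsq (conjc (x ord_max 0) * (X *m lift_pt p) ord_max 0).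
rewrite nsqM nsqJ; move: h2.
set A := nsq (x ord_max 0); set B := nsq _; set r := complex.Re _ => h2 hr.
have A0 : 0 <= A := nsq_ge0 _.
have [->|Apos] := eqVneq A 0; first by rewrite !mul0r mulr_ge0 ?nsq_ge0.
have Agt0 : 0 < A by rewrite lt_neqAle eq_sym Apos A0.
have : (A * height p) ^+ 2 <= 4 * (A * B).
  apply: (le_trans (y := (2 * r) ^+ 2)); first by rewrite ler_sqr ?nnegrE; nra.
  by rewrite exprMn; lra.
nra.
Qed.

Lemma mem_act_horoball (s : R) q : 0 < height q ->
  s * nsq (qform (lift_pt q) x) <= height q -> act_set X (horoball s) q.
Proof.
move=> hq hs; have [Xu _] := XUQ.
set y := invmx X *m lift_pt q.
have Xy : X *m y = lift_pt q by rewrite mulmxA mulmxV // mul1mx.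
have hyy : complex.Re (qform y y) = - height q by rewrite -(qform_UQ _ _ XUQ) Xy Re_qform_lift.
have ny : y ord_max 0 != 0 by apply: last_neq0_of_qform_lt0; rewrite hyy oppr_lt0.
have nyq : nsq (y ord_max 0) = nsq (qform (lift_pt q) x).
  by rewrite -Xy qform_UQ // qform_e0r nsqN nsqJ.
exists (dehomog y).
  rewrite /horoball /= height_dehomog // hyy opprK ler_pdivlMr ?nsq_gt0 // nyq; lra.
rewrite /act lift_dehomog // -scalemxAr Xy.
apply/funext => i; rewrite !scalemxE lift_pt_widen lift_pt_last mulr1.
by rewrite mulrC mulKf // invr_eq0.
Qed.

End ProjectiveAction.

Section Interior.
Variable R : realType.
Local Notation C := (complex R).
Variable m : nat.
Local Notation n := m.+1.
Local Notation cv := 'cV[C]_(n.+1).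
Local Notation widen := (widen_ord (leqnSn n)).
Implicit Types (A B : set (pt R n)) (p q : pt R n).

Lemma cinteriorS A B p : A `<=` B -> cinterior A p -> cinterior B p.
Proof. by move=> AB [e e0 He]; exists e => // q /He /AB. Qed.

Lemma cinteriorI A B p : cinterior A p -> cinterior B p -> cinterior (A `&` B) p.
Proof.
move=> [e1 e10 He1] [e2 e20 He2]; exists (Num.min e1 e2); first by rewrite lt_min e10 e20.
by move=> q; rewrite lt_min => /andP[/He1 ? /He2 ?].
Qed.

Lemma height_term_ge (b : bool) (a d : C) (l : R) : 0 < l ->
  (if b then 2 * complex.Re a else - nsq a) - l * (if b then 1 else nsq a)
    - (1 + l^-1) * nsq d
  <= (if b then 2 * complex.Re (a + d) else - nsq (a + d)).
Proof.
move=> l0; have li : l * l^-1 = 1 by rewrite mulfV ?gt_eqF.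
have lip : 0 < l^-1 by rewrite invr_gt0.
case: b; rewrite /nsq ?ReD ?ImD.
  by have := weighted_amgm (-1) (complex.Re d) l0; have := Re_sqr_le_nsq d; rewrite /nsq; nra.
by have := weighted_amgm (complex.Re a) (complex.Re d) l0;
   have := weighted_amgm (complex.Im a) (complex.Im d) l0; nra.
Qed.

Lemma cinterior_height_gt p (eta : R) : 0 < eta ->
  cinterior [set q | height p - eta < height q] p.
Proof.
move=> et; set W := \sum_(i < n) (if is_w0 i then 1 else nsq (p i)).
have W0 : 0 <= W by apply: sumr_ge0 => i _; case: ifP => _ //; apply: nsq_ge0.
set l := eta / (2 * (W + 1)).
have l0 : 0 < l by apply: divr_gt0 => //; lra.
have lip : 0 < l^-1 by rewrite invr_gt0.
exists (eta / (2 * (1 + l^-1))) => [|q hN]; first by apply: divr_gt0 => //; lra.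
have : \sum_(i < n) ((if is_w0 i then 2 * complex.Re (p i) else - nsq (p i))
    - l * (if is_w0 i then 1 else nsq (p i)) - (1 + l^-1) * nsq (q i - p i)) <= height q.
  apply: ler_sum => i _; have := height_term_ge (is_w0 i) (p i) (q i - p i) l0.
  by rewrite [p i + _]addrC subrK.
rewrite !sumrB -!mulr_sumr -/(height p) -/W /=.
set N := \sum_(i < n) _ in hN *.
have h1 : l * W < eta / 2.
  rewrite /l mulrAC ltr_pdivrMr; last lra.
  have : eta * W < eta * (W + 1) by rewrite ltr_pM2l //; lra.
  lra.
have h2 : (1 + l^-1) * N < eta / 2 by rewrite mulrC -ltr_pdivlMr -?mulrA -?invfM //; lra.
lra.
Qed.

Lemma qform_lift_sub p q (x : cv) :
  qform (lift_pt q) x = qform (lift_pt p) x +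
    \sum_(i < n) conjc (q i - p i) * (if is_w0 i then - x ord_max 0 else x (widen i) 0).
Proof.
rewrite !qformE -big_split /=; apply: eq_bigr => i _.
by rewrite /qform_term !lift_pt_widen !lift_pt_last rmorphB /=; case: ifP => _; ring.
Qed.

Lemma cinterior_qform_lt p (x : cv) (eta : R) : 0 < eta ->
  cinterior [set q | nsq (qform (lift_pt q) x) < nsq (qform (lift_pt p) x) + eta] p.
Proof.
move=> et; set y := fun i : 'I_n => if is_w0 i then - x ord_max 0 else x (widen i) 0.
set K := \sum_(i < n) nsq (y i).
have K0 : 0 <= K by apply: sumr_ge0 => i _; apply: nsq_ge0.
have yK i : nsq (y i) <= K.
  by rewrite /K (bigD1 i) //= lerDl; apply: sumr_ge0 => j _; apply: nsq_ge0.
set a := qform (lift_pt p) x; have a0 := nsq_ge0 a.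
set l := eta / (2 * (nsq a + 1)).
have l0 : 0 < l by apply: divr_gt0 => //; lra.
have lip : 0 < l^-1 by rewrite invr_gt0.
set M := (1 + l^-1) * (n%:R * K + 1).
have M0 : 0 < M by rewrite mulr_gt0 ?ltr_wpDl ?mulr_ge0 ?ler0n //; lra.
exists (eta / (2 * M)) => [|q hN]; first by apply: divr_gt0 => //; lra.
rewrite /= (qform_lift_sub p) -/a; set b := \sum_(i < n) _.
set N := \sum_(i < n) _ in hN.
have N0 : 0 <= N by apply: sumr_ge0 => i _; apply: nsq_ge0.
have hb : nsq b <= n%:R * K * N.
  apply: (le_trans (nsq_sum _)); rewrite -mulrA ler_wpM2l ?ler0n // /N mulr_sumr.
  by apply: ler_sum => i _; rewrite nsqM nsqJ mulrC ler_wpM2r ?nsq_ge0 //; apply: yK.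
apply: le_lt_trans (nsqD_le a b l0) _.
have h1 : l * nsq a < eta / 2.
  rewrite /l mulrAC ltr_pdivrMr; last lra.
  have : eta * nsq a < eta * (nsq a + 1) by rewrite ltr_pM2l //; lra.
  lra.
have h2 : (1 + l^-1) * nsq b < eta / 2.
  apply: (le_lt_trans (y := M * N)).
    by rewrite /M -[_ * _ * N]mulrA ler_wpM2l; lra.
  by rewrite mulrC -ltr_pdivlMr // -mulrA -invfM.
lra.
Qed.

End Interior.

Section VerticalLines.
Variable R : realType.
Local Notation C := (complex R).
Variable m : nat.
Local Notation n := m.+1.
Local Notation cv := 'cV[C]_(n.+1).
Local Notation widen := (widen_ord (leqnSn n)).
Implicit Types (z v : cv) (t : R).

(** [vertical z t] is the point at height [2 t] above the boundary point
    represented by the isotropic vector [z]. *)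
Definition vertical z t : pt R n :=
  fun i => z (widen i) 0 / z ord_max 0 + (if is_w0 i then Complex t 0 else 0).

Lemma lift_vertical z t : z ord_max 0 != 0 ->
  lift_pt (vertical z t) = (z ord_max 0)^-1 *: z + Complex t 0 *: e0 R m.
Proof.
move=> nz; apply/matrixP => i j; rewrite (ord1 j) !mxE.
case: eqP => [h|/negP/negbTE/eq_ord_max->]; last by rewrite mulVf // mulr0 addr0.
rewrite /vertical mulrC; congr (_ * z _ 0 + _); first exact: val_inj.
by rewrite /is_w0 /=; case: ifP; rewrite ?mulr1 ?mulr0.
Qed.

Lemma qform_lift_vertical z v t : z ord_max 0 != 0 ->
  qform (lift_pt (vertical z t)) v
    = (conjc (z ord_max 0))^-1 * qform z v - Complex t 0 * v ord_max 0.
Proof.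
move=> nz; rewrite lift_vertical // qformDl !qformZl qform_e0l conjc_inv.
by rewrite /= oppr0 mulrN.
Qed.

Lemma height_vertical z t : z ord_max 0 != 0 -> qform z z = 0 -> height (vertical z t) = 2 * t.
Proof.
move=> nz zz; apply: oppr_inj; rewrite -Re_qform_lift qform_lift_vertical // lift_pt_last.
rewrite lift_vertical // qformDr !qformZr zz qform_e0r mulr0 add0r.
rewrite !mulrN mulrCA mulVf ?conjc_eq0 // !mulr1 !(ReD, ReN) /=; ring.
Qed.

Lemma nsq_qform_lift_vertical z t : z ord_max 0 != 0 -> qform z z = 0 ->
  nsq (qform (lift_pt (vertical z t)) z) = t ^+ 2 * nsq (z ord_max 0).
Proof. by move=> nz zz; rewrite qform_lift_vertical // zz mulr0 add0r nsqN nsqM nsq_real. Qed.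

Definition w0_axis t : pt R n := fun i => if is_w0 i then Complex t 0 else 0.

Lemma height_w0_axis t : height (w0_axis t) = 2 * t.
Proof.
rewrite /height big_ord_recl big1 ?addr0 // => i _.
by rewrite /w0_axis is_w0_lift nsq_real expr0n oppr0.
Qed.

Lemma metric_w0_axis (p : pt R n) (d : R) : metric p (w0_axis d) = (2 * d / height p) ^+ 2.
Proof.
rewrite /metric !big_ord_recl /w0_axis !is_w0_ord0 !big1 => [|i _|i _];
  rewrite ?is_w0_lift ?conjc0 ?mul0r ?oppr0 ?nsq0 //.
have four : (2 : R) ^+ 2 = 4 by rewrite expr2 -natrM.
by rewrite !addr0 nsq_real mulr0 addr0 expr_div_n exprMn mulrAC four.
Qed.

Lemma qform_lift_w0_axis t v : v ord_max 0 = 0 -> qform (lift_pt (w0_axis t)) v = - v 0 0.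
Proof.
move=> v0; rewrite qformE big_ord_recl big1 ?addr0 => [|i _].
  rewrite /qform_term !lift_pt_widen lift_pt_last /w0_axis is_w0_ord0 v0 conjc1.
  by rewrite (_ : widen ord0 = 0) ?mulr0 ?mul1r ?add0r //; apply: val_inj.
by rewrite /qform_term lift_pt_widen /w0_axis is_w0_lift conjc0 mul0r.
Qed.

(** The second condition puts [q] inside [X H_s] when [x = X e0]
    (see [mem_act_horoball]). *)
Lemma exists_common_deep_point (x : cv) (s : R) : 0 < s -> qform x x = 0 ->
  nsq (x ord_max 0) * s ^+ 2 < 4 ->
  exists q : pt R n, s < height q /\ s * nsq (qform (lift_pt q) x) < height q.
Proof.
move=> s0 xx hlt; have [x0|nz] := eqVneq (x ord_max 0) 0.
  set t := s + s * nsq (x 0 0) + 1; have A0 := nsq_ge0 (x 0 0).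
  by exists (w0_axis t); rewrite height_w0_axis qform_lift_w0_axis // nsqN /t; split; nra.
have N0 := nsq_gt0 nz; set N := nsq (x ord_max 0) in hlt N0 *.
have sN : 0 < s * N by rewrite mulr_gt0.
have hb : s / 2 < 2 / (s * N) by rewrite ltr_pdivlMr // mulrAC ltr_pdivrMr //; lra.
set t := (s / 2 + 2 / (s * N)) / 2.
have tb : t * (s * N) < 2 by rewrite -ltr_pdivlMr // /t; lra.
have ta : s / 2 < t by rewrite /t; lra.
exists (vertical x t); rewrite height_vertical // nsq_qform_lift_vertical // -/N.
by split; nra.
Qed.

End VerticalLines.

Section HoroballPair.
Variable R : realType.
Local Notation C := (complex R).
Variable m : nat.
Local Notation n := m.+1.
Variable X : 'M[C]_n.+1.
Hypothesis XUQ : in_UQ X.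
Local Notation x := (X *m e0 R m).
Local Notation H s := (horoball (n := n) s).

Lemma cinterior_horoball (s : R) (q : pt R n) : s < height q -> cinterior (H s) q.
Proof.
move=> hq; apply: cinteriorS (cinterior_height_gt q (_ : 0 < height q - s)); last lra.
by move=> q'; rewrite /horoball /=; lra.
Qed.

Lemma cinterior_act_horoball (s : R) (q : pt R n) : 0 < s ->
  s * nsq (qform (lift_pt q) x) < height q -> cinterior (act_set X (H s)) q.
Proof.
move=> s0; set F := nsq _ => hq; have F0 : 0 <= F := nsq_ge0 _.
set eta := (height q - s * F) / (2 * (1 + s)).
have eta0 : 0 < eta by apply: divr_gt0; lra.
have eta_le : (1 + s) * eta <= height q - s * F.
  have -> : (1 + s) * eta = (height q - s * F) / 2.
    by rewrite /eta; field; apply: lt0r_neq0; lra.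
  lra.
apply: cinteriorS (cinteriorI (cinterior_height_gt q eta0) (cinterior_qform_lt q x eta0)).
move=> q' [/= h1 h2]; rewrite -/F in h2.
have hs : s * nsq (qform (lift_pt q') x) <= s * F + s * eta.
  by rewrite -mulrDr ler_wpM2l ?(ltW s0) //; apply: ltW.
have := mulr_ge0 (ltW s0) F0; have := mulr_ge0 (ltW s0) (ltW eta0).
by move=> ? ?; apply: mem_act_horoball => //; lra.
Qed.

Lemma disjoint_horoballs_bound (s : R) : 0 < s ->
  cinterior (H s) `&` cinterior (act_set X (H s)) = set0 -> 4 <= nsq (bottom_left X) * s ^+ 2.
Proof.
move=> s0 disj; rewrite leNgt bottom_leftE; apply/negP => hlt.
have [q [h1 h2]] := exists_common_deep_point s0 (qform_image_e0 XUQ) hlt.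
suff : (cinterior (H s) `&` cinterior (act_set X (H s))) q by rewrite disj.
by split; [apply: cinterior_horoball | apply: cinterior_act_horoball].
Qed.

Lemma vertical_mem_act_horoball (s : R) : 0 < s -> x ord_max 0 != 0 ->
  act_set X (H s) (vertical x (2 / (s * nsq (x ord_max 0)))).
Proof.
move=> s0 nz; have N0 := nsq_gt0 nz; set N := nsq _ in N0 *; set t := 2 / _.
have tsN : t * (s * N) = 2 by rewrite divfK ?mulf_neq0 ?gt_eqF.
have xx := qform_image_e0 XUQ.
apply: mem_act_horoball; rewrite // height_vertical //.
  by rewrite mulr_gt0 ?divr_gt0 ?mulr_gt0.
rewrite nsq_qform_lift_vertical // -/N.
have -> : s * (t ^+ 2 * N) = t * (t * (s * N)) by ring.
by rewrite tsN mulrC.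
Qed.

End HoroballPair.

Section RealCalculus.
Variable R : realType.
Local Notation mu := (@lebesgue_measure R).

Lemma Rintegral01_derive (F f : R -> R) :
  (forall t : R, 0 <= t <= 1 -> is_derive t 1 F (f t) /\ {for t, continuous f}) ->
  Rintegral mu `[0, 1] f = F 1 - F 0.
Proof.
move=> H; have Fc t : 0 <= t <= 1 -> {for t, continuous F}.
  move=> /H[[dF _] _]; exact/differentiable_continuous/derivable1_diffP.
have t01 t : 0 < t < 1 -> 0 <= t <= 1 by move=> /andP[t0 t1]; rewrite !ltW.
rewrite /Rintegral (@continuous_FTC2 R f F 0 1 ltr01) //.
- by apply: continuous_in_subspaceT => t; rewrite inE /= in_itv /= => /H[].
- split.
  + by move=> t; rewrite in_itv /= => /t01 /H[[]].
  + by apply: cvg_at_right_filter; apply: Fc; rewrite lexx ler01.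
  + by apply: cvg_at_left_filter; apply: Fc; rewrite lexx ler01.
- move=> t; rewrite in_itv /= => /t01 /H[dF _].
  by rewrite derive1E derive_val.
Qed.

Lemma continuous_integrable01 (f : R -> R) :
  (forall t : R, 0 <= t <= 1 -> {for t, continuous f}) -> mu.-integrable `[0, 1] (EFin \o f).
Proof.
move=> H; apply: continuous_compact_integrable; first exact: segment_compact.
by apply: continuous_in_subspaceT => t; rewrite inE /= in_itv /= => /H.
Qed.

Lemma continuous_sum (I : Type) (r : seq I) (F : I -> R -> R) (t : R) :
  (forall i, {for t, continuous (F i)}) ->
  {for t, continuous (fun u => \sum_(i <- r) F i u)}.
Proof.
move=> H; rewrite -fct_sumE; elim/big_ind: _ => //; first exact: cst_continuous.
by move=> f g; apply: continuousD.
Qed.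

Lemma is_derive_affine (a b t : R) : is_derive t 1 (fun u : R => a + u * b) b.
Proof.
have := is_deriveD (is_derive_cst a t 1) (is_deriveM (is_derive_id t 1) (is_derive_cst b t 1)).
by move=> h; apply: (is_derive_eq h); rewrite /GRing.scale /=; ring.
Qed.

Lemma derive1_affine (a b : R) : derive1 (fun u : R => a + u * b) = cst b.
Proof. by apply/funext => t; rewrite derive1E; case: (is_derive_affine a b t). Qed.

End RealCalculus.

Section CurveLength.
Variable R : realType.
Local Notation mu := (@lebesgue_measure R).
Variable n : nat.
Variable g : R -> pt R n.
Hypothesis g_C1 : C1curve g.

Let gRe (i : 'I_n) (u : R) := complex.Re (g u i).
Let gIm (i : 'I_n) (u : R) := complex.Im (g u i).

Let is_derive_gRe (i : 'I_n) (t : R) : is_derive t 1 (gRe i) (derive1 (gRe i) t).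
Proof. by have [h _] := g_C1 i; rewrite derive1E; apply/derivableP/h. Qed.
Let is_derive_gIm (i : 'I_n) (t : R) : is_derive t 1 (gIm i) (derive1 (gIm i) t).
Proof. by have [_ [_ [h _]]] := g_C1 i; rewrite derive1E; apply/derivableP/h. Qed.

Let gRe_cont (i : 'I_n) (t : R) : {for t, continuous (gRe i)}.
Proof. by have [h _] := g_C1 i; apply/differentiable_continuous/derivable1_diffP/h. Qed.
Let gIm_cont (i : 'I_n) (t : R) : {for t, continuous (gIm i)}.
Proof. by have [_ [_ [h _]]] := g_C1 i; apply/differentiable_continuous/derivable1_diffP/h. Qed.
Let dgRe_cont (i : 'I_n) (t : R) : {for t, continuous (derive1 (gRe i))}.
Proof. by have [_ [h _]] := g_C1 i; apply: h. Qed.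
Let dgIm_cont (i : 'I_n) (t : R) : {for t, continuous (derive1 (gIm i))}.
Proof. by have [_ [_ [_ h]]] := g_C1 i; apply: h. Qed.

Definition dheight (u : R) : R := \sum_(i < n)
  (if is_w0 i then 2 * derive1 (gRe i) u
   else - (2 * gRe i u * derive1 (gRe i) u + 2 * gIm i u * derive1 (gIm i) u)).

Lemma is_derive_height (t : R) : is_derive t 1 (fun u => height (g u)) (dheight t).
Proof.
have -> : (fun u => height (g u)) = \sum_(i < n) (fun u =>
    if is_w0 i then 2 * gRe i u else - (gRe i u * gRe i u + gIm i u * gIm i u)).
  by rewrite fct_sumE; apply/funext => u; apply: eq_bigr => i _; rewrite /nsq !expr2.
apply: is_derive_sum => i; case: (is_w0 i).
  exact: (is_derive_eq (is_deriveZ 2 (is_derive_gRe i t))).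
have := is_deriveN (is_deriveD (is_deriveM (is_derive_gRe i t) (is_derive_gRe i t))
                               (is_deriveM (is_derive_gIm i t) (is_derive_gIm i t))).
by move=> h; apply: (is_derive_eq h); rewrite /GRing.scale /=; ring.
Qed.

Lemma height_curve_cont (t : R) : {for t, continuous (fun u => height (g u))}.
Proof. by apply/differentiable_continuous/derivable1_diffP; case: (is_derive_height t). Qed.

Lemma dheight_cont (t : R) : {for t, continuous dheight}.
Proof.
apply: continuous_sum => i; case: (is_w0 i).
  exact/continuousM/dgRe_cont/cst_continuous.
apply/continuousN/continuousD; apply/continuousM.
- exact/continuousM/gRe_cont/cst_continuous.
- exact: dgRe_cont.
- exact/continuousM/gIm_cont/cst_continuous.
- exact: dgIm_cont.
Qed.

Definition metric_aRe (u : R) : R := \sum_(i < n)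
  (if is_w0 i then derive1 (gRe i) u
   else - (derive1 (gRe i) u * gRe i u + derive1 (gIm i) u * gIm i u)).
Definition metric_aIm (u : R) : R := \sum_(i < n)
  (if is_w0 i then derive1 (gIm i) u
   else - (derive1 (gRe i) u * gIm i u - derive1 (gIm i) u * gRe i u)).
Definition metric_b (u : R) : R := \sum_(i < n)
  (if is_w0 i then 0
   else derive1 (gRe i) u * derive1 (gRe i) u + derive1 (gIm i) u * derive1 (gIm i) u).

Lemma metric_velocityE (t : R) : metric (g t) (velocity g t) =
  4 / (height (g t) * height (g t)) *
    (metric_aRe t * metric_aRe t + metric_aIm t * metric_aIm t + height (g t) * metric_b t).
Proof.
rewrite /metric /nsq Re_sum Im_sum !expr2; congr (_ / _ * (_ * _ + _ * _ + _ * _));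
  apply: eq_bigr => i _; rewrite /velocity; case: ifP => _ //;
  by rewrite ?(ReN, ImN, ReM, ImM, ReJ, ImJ) /=; congr (- _); ring.
Qed.

(** [Re (dw0 - dw^* w) = dh / 2] is where [ds >= - d (ln h)] comes from. *)
Lemma metric_aRe_dheight (t : R) : 2 * metric_aRe t = dheight t.
Proof.
by rewrite /metric_aRe /dheight mulr_sumr; apply: eq_bigr => i _; case: ifP => _ //; ring.
Qed.

Lemma sqrt_metric_ge (t : R) : 0 < height (g t) ->
  - (dheight t / height (g t)) <= Num.sqrt (metric (g t) (velocity g t)).
Proof.
move=> h0; rewrite metric_velocityE -metric_aRe_dheight.
set h := height (g t) in h0 *; set a := metric_aRe t; set b := metric_aIm t.
have B0 : 0 <= h * metric_b t.
  apply: mulr_ge0; first exact: ltW.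
  by apply: sumr_ge0 => i _; case: ifP => _ //; rewrite -!expr2 addr_ge0 ?sqr_ge0.
apply: le_trans (ler_norm _) _; rewrite normrN -sqrtr_sqr ler_wsqrtr //.
have -> : (2 * a / h) ^+ 2 = 4 / (h * h) * (a * a) by field; rewrite gt_eqF.
apply: ler_wpM2l; first by rewrite divr_ge0 // mulr_ge0 // ltW.
by rewrite -addrA lerDl addr_ge0 // -expr2 sqr_ge0.
Qed.

Lemma sqrt_metric_cont (t : R) : height (g t) != 0 ->
  {for t, continuous (fun u => Num.sqrt (metric (g u) (velocity g u)))}.
Proof.
move=> h0; have hc := height_curve_cont (t := t).
have aRe_c : {for t, continuous metric_aRe}.
  apply: continuous_sum => i; case: (is_w0 i); first exact: dgRe_cont.
  by apply/continuousN/continuousD; apply/continuousM;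
    [apply: dgRe_cont | apply: gRe_cont | apply: dgIm_cont | apply: gIm_cont].
have aIm_c : {for t, continuous metric_aIm}.
  apply: continuous_sum => i; case: (is_w0 i); first exact: dgIm_cont.
  by apply/continuousN/continuousB; apply/continuousM;
    [apply: dgRe_cont | apply: gIm_cont | apply: dgIm_cont | apply: gRe_cont].
have b_c : {for t, continuous metric_b}.
  apply: continuous_sum => i; case: (is_w0 i); first exact: cst_continuous.
  by apply/continuousD; apply/continuousM;
    [apply: dgRe_cont | apply: dgRe_cont | apply: dgIm_cont | apply: dgIm_cont].
have -> : (fun u => Num.sqrt (metric (g u) (velocity g u))) =
    Num.sqrt \o (fun u => 4 / (height (g u) * height (g u)) *
      (metric_aRe u * metric_aRe u + metric_aIm u * metric_aIm u + height (g u) * metric_b u)).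
  by apply/funext => u; rewrite /= metric_velocityE.
apply: continuous_comp; last exact: sqrt_continuous.
apply: continuousM.
  apply: continuousM; first exact: cst_continuous.
  by apply: continuousV; [rewrite mulf_neq0 | exact: continuousM].
apply: continuousD; last exact: continuousM.
by apply: continuousD; apply: continuousM.
Qed.

Lemma curve_length_ge_ln_height :
  (forall t, 0 <= t <= 1 -> 0 < height (g t)) ->
  ln (height (g 0)) - ln (height (g 1)) <= curve_length g.
Proof.
move=> hpos; set f := fun u => - (dheight u / height (g u)).
have fc t : 0 <= t <= 1 -> {for t, continuous f}.
  move=> ht; apply/continuousN/continuousM; first exact: dheight_cont.
  by apply: continuousV; [rewrite gt_eqF ?hpos | exact: height_curve_cont].
have -> : ln (height (g 0)) - ln (height (g 1)) = Rintegral mu `[0, 1] f.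
  rewrite (Rintegral01_derive (F := fun u => - ln (height (g u)))) /=; first lra.
  move=> t ht; split; last exact: fc.
  have := is_deriveN (is_derive1_comp (is_derive1_ln (hpos t ht)) (is_derive_height t)).
  by move=> h; apply: (is_derive_eq h); rewrite /f mulrC.
apply: le_Rintegral => //.
- exact: continuous_integrable01.
- apply: continuous_integrable01 => t ht.
  by apply: sqrt_metric_cont; rewrite gt_eqF ?hpos.
- by move=> t; rewrite /= in_itv /= => ht; apply: sqrt_metric_ge; apply: hpos.
Qed.

End CurveLength.

Section Distance.
Variable R : realType.
Variable n : nat.
Implicit Types (p q : pt R n) (g : R -> pt R n).

Lemma affine_curve_C1 g (a b c d : 'I_n -> R) :
  (forall i u, complex.Re (g u i) = a i + u * b i) ->
  (forall i u, complex.Im (g u i) = c i + u * d i) ->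
  C1curve g /\ forall u, velocity g u = fun i => Complex (b i) (d i).
Proof.
move=> gRe gIm.
have eRe i : (fun u => complex.Re (g u i)) = fun u => a i + u * b i by apply/funext.
have eIm i : (fun u => complex.Im (g u i)) = fun u => c i + u * d i by apply/funext.
split=> [i|u]; last by apply/funext => i; rewrite /velocity eRe eIm !derive1_affine.
rewrite eRe eIm !derive1_affine.
have ex_d (e f t : R) : derivable (fun u : R => e + u * f) t 1.
  by apply: ex_derive; apply: is_derive_affine.
by split; [|split; [|split]] => t; rewrite ?ex_d //; apply: cst_continuous.
Qed.

Definition segment p q (u : R) : pt R n := fun i => p i + Complex u 0 * (q i - p i).

Lemma height_segment_ge p q (u : R) : 0 <= u <= 1 ->
  (1 - u) * height p + u * height q <= height (segment p q u).
Proof.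
move=> /andP[u0 u1]; rewrite /height !mulr_sumr -big_split /=; apply: ler_sum => i _.
rewrite /segment; case: ifP => _; rewrite /nsq ?(ReD, ImD, ReM, ImM, ReN, ImN) /=; first lra.
set a := complex.Re (p i); set b := complex.Im (p i).
set c := complex.Re (q i); set d := complex.Im (q i).
have : 0 <= u * (1 - u) * ((a - c) ^+ 2 + (b - d) ^+ 2).
  by apply: mulr_ge0; [apply: mulr_ge0; lra | rewrite addr_ge0 ?sqr_ge0].
nra.
Qed.

Lemma admissible_segment p q : 0 < height p -> 0 < height q -> admissible p q (segment p q).
Proof.
move=> hp hq.
have sRe i u : complex.Re (segment p q u i) = complex.Re (p i) + u * complex.Re (q i - p i).
  by rewrite /segment /= ReD ReM /=; ring.
have sIm i u : complex.Im (segment p q u i) = complex.Im (p i) + u * complex.Im (q i - p i).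
  by rewrite /segment /= ImD ImM /=; ring.
have [gC1 _] := affine_curve_C1 sRe sIm.
split=> //; split; first by apply/funext => i; rewrite /segment mul0r addr0.
split; first by apply/funext => i; rewrite /segment mul1r addrC subrK.
move=> t ht; apply: lt_le_trans (height_segment_ge p q ht); case/andP: ht => t0 t1.
have [->|tpos] := eqVneq t 0; first by rewrite subr0 mul1r mul0r addr0.
have : 0 < t * height q by rewrite mulr_gt0 // lt_neqAle eq_sym tpos.
have : 0 <= (1 - t) * height p by apply: mulr_ge0; [rewrite subr_ge0 | apply: ltW].
lra.
Qed.

Lemma curve_length_ge0 g : 0 <= curve_length g.
Proof. by apply: Rintegral_ge0 => x _; apply: sqrtr_ge0. Qed.

Lemma dist_CH_le_length p q g : admissible p q g -> dist_CH p q <= curve_length g.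
Proof.
move=> pqg; apply: ge_inf; last by exists g.
by exists 0 => _ [g' _ <-]; apply: curve_length_ge0.
Qed.

Lemma dist_CH_ge_ln_height p q : 0 < height p -> 0 < height q ->
  ln (height p) - ln (height q) <= dist_CH p q.
Proof.
move=> hp hq; apply: lb_le_inf; first by exists (curve_length (segment p q)), (segment p q);
  [apply: admissible_segment|].
move=> _ [g [gC1 [<- [<- gS]]] <-].
by apply: curve_length_ge_ln_height => // t /gS.
Qed.

End Distance.

Section VerticalSegment.
Variable R : realType.
Local Notation C := (complex R).
Local Notation mu := (@lebesgue_measure R).
Variable m : nat.
Local Notation n := m.+1.
Local Notation cv := 'cV[C]_(n.+1).
Variable x : cv.
Hypotheses (x_last : x ord_max 0 != 0) (xx : qform x x = 0).

Definition vertical_segment (t0 t1 u : R) : pt R n := vertical x (t0 + u * (t1 - t0)).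

Lemma vertical_segment_C1 (t0 t1 : R) : C1curve (vertical_segment t0 t1) /\
  forall u, velocity (vertical_segment t0 t1) u = w0_axis (t1 - t0).
Proof.
have vRe i u : complex.Re (vertical_segment t0 t1 u i) =
    (complex.Re (x (widen_ord (leqnSn n) i) 0 / x ord_max 0) + (if is_w0 i then t0 else 0))
    + u * (if is_w0 i then t1 - t0 else 0).
  by rewrite /vertical_segment /vertical ReD; case: ifP => _ /=; ring.
have vIm i u : complex.Im (vertical_segment t0 t1 u i) =
    complex.Im (x (widen_ord (leqnSn n) i) 0 / x ord_max 0) + u * 0.
  by rewrite /vertical_segment /vertical ImD; case: ifP => _ /=; ring.
have [gC1 vel] := affine_curve_C1 vRe vIm; split=> // u.
by rewrite vel; apply/funext => i; rewrite /w0_axis; case: ifP.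
Qed.

Lemma vertical_segment_length (t0 t1 : R) : 0 < t1 -> t1 <= t0 ->
  admissible (vertical x t0) (vertical x t1) (vertical_segment t0 t1) /\
  curve_length (vertical_segment t0 t1) = ln t0 - ln t1.
Proof.
move=> t1_gt0 t10; have [gC1 vel] := vertical_segment_C1 t0 t1.
set tau := fun u : R => t0 + u * (t1 - t0).
have tau_gt0 u : 0 <= u <= 1 -> 0 < tau u.
  case/andP=> u0 u1; have : u * (t0 - t1) <= t0 - t1 by rewrite ler_piMl //; lra.
  by rewrite /tau; lra.
split.
  split=> //; split; first by rewrite /vertical_segment mul0r addr0.
  split; first by rewrite /vertical_segment mul1r addrC subrK.
  by move=> u /tau_gt0 hu; rewrite /Siegel /= height_vertical // mulr_gt0.
set f := fun u => - (t1 - t0) / tau u.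
have -> : curve_length (vertical_segment t0 t1) = Rintegral mu `[0, 1] f.
  apply: eq_Rintegral => u; rewrite inE /= in_itv /= => /tau_gt0 hu.
  rewrite vel metric_w0_axis /vertical_segment height_vertical // -/(tau u).
  have -> : 2 * (t1 - t0) / (2 * tau u) = (t1 - t0) / tau u by field; rewrite gt_eqF.
  rewrite sqrtr_sqr ler0_norm ?mulNr //.
  by apply: mulr_le0_ge0; [lra | rewrite invr_ge0 ltW].
have tc u : {for u, continuous tau}.
  apply/differentiable_continuous/derivable1_diffP.
  by apply: ex_derive; apply: is_derive_affine.
rewrite (Rintegral01_derive (F := fun u => - ln (tau u))).
  have -> : tau 1 = t1 by rewrite /tau; ring.
  by rewrite /= /tau mul0r addr0; lra.
move=> u hu; split.
  have := is_deriveN (is_derive1_comp (is_derive1_ln (tau_gt0 u hu))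
                                      (is_derive_affine t0 (t1 - t0) u)).
  by move=> h; apply: (is_derive_eq h); rewrite /f mulrC mulNr.
apply: continuousM; first exact: cst_continuous.
by apply: continuousV; [rewrite gt_eqF ?tau_gt0 | exact: tc].
Qed.
End VerticalSegment.

Lemma inf_eq_of_lb_mem (R : realType) (S : set R) (a : R) :
  (forall z, S z -> a <= z) -> S a -> inf S = a.
Proof.
move=> lb Sa; apply/eqP; rewrite eq_le ge_inf //=; last by exists a.
by apply: lb_le_inf; [exists a | exact: lb].
Qed.

Lemma ln_nsq_mul_sqr (R : realType) (z : complex R) (a : R) : z != 0 -> 0 < a ->
  ln (nsq z * a ^+ 2) = 2 * (ln (cabs z) + ln a).
Proof.
move=> nz a0; have N0 := nsq_gt0 nz.
rewrite /cabs lnM ?posrE ?exprn_gt0 // -{1}(sqr_sqrtr (ltW N0)) !lnXn ?sqrtr_gt0 //.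
by rewrite mulrDr !mulr_natl.
Qed.

Section Main.
Variable R : realType.
Local Notation C := (complex R).
Variable m : nat.
Local Notation n := m.+1.
Variable X : 'M[C]_n.+1.
Hypothesis XUQ : in_UQ X.
Local Notation x := (X *m e0 R m).
Local Notation H s := (horoball (n := n) s).

Lemma dist'_horoball_act_ge (s : R) (p q : pt R n) : 0 < s -> bottom_left X != 0 ->
  H s p -> act_set X (H s) q ->
  ln (cabs (bottom_left X)) + ln (s / 2) <= dist'_CH p q.
Proof.
move=> s0 c0 hp [p' hp' <-]; rewrite /horoball /= in hp hp'.
have hp_gt0 : 0 < height p by lra.
have hp'_gt0 : 0 < height p' by lra.
have hq_gt0 : 0 < height (act X p').
  by rewrite height_act // divr_gt0 ?nsq_gt0 ?act_last_neq0.
have bound := height_act_bound XUQ hp'_gt0.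
have N0 := nsq_gt0 c0; set N := nsq _ in N0 bound.
rewrite /dist'_CH ler_pdivlMr // mulrC -ln_nsq_mul_sqr ?divr_gt0 // -/N.
apply: le_trans (dist_CH_ge_ln_height hp_gt0 hq_gt0).
rewrite -ln_div ?posrE // ler_ln ?posrE ?divr_gt0 ?mulr_gt0 ?exprn_gt0 ?divr_gt0 //.
rewrite ler_pdivlMr //.
have : s * s <= height p * height p' by rewrite ler_pM //; lra.
nra.
Qed.

Lemma dist'_vertical_le (s : R) : 0 < s -> bottom_left X != 0 ->
  4 <= nsq (bottom_left X) * s ^+ 2 ->
  dist'_CH (vertical x (s / 2)) (vertical x (2 / (s * nsq (bottom_left X))))
    <= ln (cabs (bottom_left X)) + ln (s / 2).
Proof.
move=> s0 c0 bound; have N0 := nsq_gt0 c0; set N := nsq _ in N0 bound *; set t1 := 2 / (s * N).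
have t1_gt0 : 0 < t1 by rewrite divr_gt0 ?mulr_gt0.
have t1_le : t1 <= s / 2 by rewrite ler_pdivrMr ?mulr_gt0 //; nra.
have nz : x ord_max 0 != 0 by rewrite -bottom_leftE.
have [adm len] := vertical_segment_length nz (qform_image_e0 XUQ) t1_gt0 t1_le.
rewrite /dist'_CH ler_pdivrMr // [X in _ <= X]mulrC -ln_nsq_mul_sqr ?divr_gt0 // -/N.
apply: le_trans (dist_CH_le_length adm) _; rewrite len -ln_div ?posrE ?divr_gt0 ?mulr_gt0 //.
suff -> : s / 2 / t1 = N * (s / 2) ^+ 2 by [].
by rewrite /t1; field; rewrite ?gt_eqF.
Qed.

Lemma set_dist'_horoball_act (s : R) : 0 < s ->
  cinterior (H s) `&` cinterior (act_set X (H s)) = set0 ->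
  set_dist' (H s) (act_set X (H s)) = ln (cabs (bottom_left X)) + ln (s / 2).
Proof.
move=> s0 disj; have bound := disjoint_horoballs_bound XUQ s0 disj.
have c0 : bottom_left X != 0 by apply: contraTneq bound => ->; rewrite nsq0 mul0r; lra.
have nz : x ord_max 0 != 0 by rewrite -bottom_leftE.
have p0 : H s (vertical x (s / 2)).
  by rewrite /horoball /= height_vertical ?qform_image_e0 //; lra.
have q0 : act_set X (H s) (vertical x (2 / (s * nsq (bottom_left X)))).
  by rewrite bottom_leftE; apply: vertical_mem_act_horoball.
apply: inf_eq_of_lb_mem => [_ [p hp [q hq <-]]|]; first exact: dist'_horoball_act_ge.
exists (vertical x (s / 2)) => //; exists (vertical x (2 / (s * nsq (bottom_left X)))) => //.
apply/le_anti.
by rewrite dist'_vertical_le // dist'_horoball_act_ge.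
Qed.

End Main.

Theorem lemma6p3 (R : realType) (n : nat) (hn : (2 <= n)%N)
  (X : 'M[complex R]_(n.+1)) (s : R) :
  in_UQ X -> 0 < s ->
  cinterior (@horoball R n s) `&` cinterior (act_set X (@horoball R n s)) = set0 ->
  set_dist' (@horoball R n s) (act_set X (@horoball R n s)) =
    ln (cabs (bottom_left X)) + ln (s / 2).
Proof. by case: n hn X => [|m] // _ X XUQ; apply: set_dist'_horoball_act. Qed.
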